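(* Let $n>0$ be an integer, $C_1>0$ a constant, and let $P$ be a real monic polynomial of degree $n$ in one real variable. For each integer $k\geq 0$ let $\tilde{P}_k(x):=2^{-nk}P(2^kx)$ and $$E_k:=\left\{x\in\mathbb{R}:\ \left|\frac{\tilde{P}_k(x)}{\tilde{P}_k'(x)}\right|\leq\frac{4}{C_1}\ \text{and}\ \left(\frac{\tilde{P}_k}{\tilde{P}_k'}\right)'(x)\leq\frac{1}{8n}\right\}.$$ Then for any $\alpha\in(0,1)$, $\sum_{k\geq 0}|E_k|^{\alpha}\leq C$, where $C$ depends only on $n$ and $C_1$ (and not on the coefficients of $P$).
   Context: $|E|$ denotes the Lebesgue measure of $E\subset\mathbb{R}$. *)

From HB Require Import structures.
From mathcomp Require Import all_boot all_order all_algebra.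
From mathcomp Require Import all_classical all_reals all_analysis.
Set Implicit Arguments. Unset Strict Implicit. Unset Printing Implicit Defensive.
Import Order.TTheory GRing.Theory Num.Theory.
Local Open Scope classical_set_scope.
Local Open Scope ring_scope.

Definition Ptilde {R : realType} (n : nat) (P : {poly R}) (k : nat) : R -> R :=
  fun x => (2 : R) ^- (n * k) * P.[(2 : R) ^+ k * x].

Definition Eset {R : realType} (n : nat) (C1 : R) (P : {poly R}) (k : nat)
  : set R :=
  [set x | let f := Ptilde n P k in
           let q := fun y => f y / derive1 f y in
           derive1 f x != 0 /\
           `| q x | <= 4 / C1 /\
           derive1 q x <= 1 / (8 * n%:R)].

From HB Require Import structures.
From mathcomp Require Import all_boot all_order all_algebra.
From mathcomp Require Import all_classical all_reals all_analysis.
From mathcomp Require Import complex ring lra.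
Set Implicit Arguments. Unset Strict Implicit. Unset Printing Implicit Defensive.
Import Order.TTheory GRing.Theory Num.Theory.
Local Open Scope classical_set_scope.
Local Open Scope ring_scope.

(* Over C the monic P splits as prod_z (X - z), and the rescaled polynomial Q := P~_k
   splits with roots z / 2^k.  With w_z := (x - z / 2^k)^-1, one has Q'/Q = sum_z w_z and
   (Q/Q')' = (sum_z w_z^2) / (sum_z w_z)^2.  At a point x of E_k the real number
   sigma := sum_z w_z thus has |sigma| >= C1/4 while Re (sum_z w_z^2) <= sigma^2/(8n);
   Cauchy-Schwarz on the real parts of the w_z forces some root with
   (Im w_z)^2 >= sigma^2/(2n^2), i.e. |x - z/2^k|^2 <= K |Im z| / 2^k with K = 8n/C1.
   The trace of that disc on the real line is an interval of length at most
   2 sqrt (K |Im z| / 2^k), and it is empty unless |Im z| / 2^k <= K.  Subadditivity of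
   t |-> t^alpha bounds |E_k|^alpha by the sum over the roots of these lengths to the
   power alpha, and for each root the sum over k is a geometric series of ratio
   2^(-alpha/2) whose largest term is at most (2K)^alpha, whatever z is. *)

Section prod_XsubC.
Variable F : fieldType.
Implicit Types (s : seq F) (y c : F).

Local Notation pi s := (\prod_(z <- s) ('X - z%:P)).

Lemma horner_deriv_prod_XsubC s y : y \notin s ->
  (pi s)^`().[y] = (pi s).[y] * \sum_(z <- s) (y - z)^-1.
Proof.
elim: s => [|z s IH]; first by rewrite !big_nil -polyC1 derivC !hornerE ?mulr0.
rewrite inE negb_or => /andP[yz /IH {}IH].
have yz0 : y - z != 0 by rewrite subr_eq0.
rewrite !big_cons derivM derivXsubC !hornerE IH.
by field.
Qed.

Lemma horner_deriv2_prod_XsubC s y : y \notin s ->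
  (pi s)^`()^`().[y] =
  (pi s).[y] * ((\sum_(z <- s) (y - z)^-1) ^+ 2 - \sum_(z <- s) (y - z)^-1 ^+ 2).
Proof.
elim: s => [|z s IH].
  by rewrite !big_nil -polyC1 !derivC !hornerE ?expr0n ?subrr ?mulr0.
rewrite inE negb_or => /andP[yz ys].
have yz0 : y - z != 0 by rewrite subr_eq0.
rewrite !big_cons derivM derivXsubC mul1r derivD derivM derivXsubC mul1r.
rewrite !(hornerD, hornerM, hornerN, hornerX, hornerC).
rewrite IH // horner_deriv_prod_XsubC //.
by field.
Qed.

Lemma comp_prod_XsubC_scaleX s c : c != 0 ->
  pi s \Po (c *: 'X) = c ^+ size s *: pi [seq z / c | z <- s].
Proof.
move=> c0; elim: s => [|z s IH]; first by rewrite !big_nil comp_polyC scale1r.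
rewrite !big_cons comp_polyM IH comp_polyB comp_polyX comp_polyC /=.
have -> : c *: 'X - z%:P = c *: ('X - (z / c)%:P).
  by rewrite scalerBr scale_polyC mulrC divfK.
by rewrite -scalerAl -scalerAr scalerA exprS.
Qed.

End prod_XsubC.

Section real_sums.
Variable R : realFieldType.

Lemma ler_sqr_sum (T : Type) (s : seq T) (f : T -> R) :
  (\sum_(z <- s) f z) ^+ 2 <= (size s)%:R * \sum_(z <- s) f z ^+ 2.
Proof.
elim: s => [|z s IH]; first by rewrite !big_nil expr0n mul0r.
have [/size0nil -> | s0] := eqVneq (size s) 0%N.
  by rewrite !big_seq1 mul1r.
rewrite !big_cons /= mulrS.
set A := \sum_(j <- s) f j in IH *; set B := \sum_(j <- s) f j ^+ 2 in IH *.
set m := (size s)%:R in IH *.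
have m0 : 0 < m by rewrite ltr0n lt0n.
have B0 : 0 <= B by rewrite sumr_ge0 // => i _; rewrite sqr_ge0.
have cross : 2 * f z * A <= m * f z ^+ 2 + B.
  rewrite -(ler_pM2l m0); have := sqr_ge0 (m * f z - A); nra.
nra.
Qed.

Lemma exists_ge_mean (T : eqType) (s : seq T) (f : T -> R) : s != [::] ->
  exists2 z, z \in s & \sum_(i <- s) f i <= (size s)%:R * f z.
Proof.
elim: s => [//|z s IH] _.
have [-> | /IH [w ws hw]] := eqVneq s [::].
  by exists z; rewrite ?mem_seq1 // big_seq1 mul1r.
have m0 : 0 <= (size s)%:R :> R by [].
have [zw | wz] := lerP (f z) (f w).
  exists w; first by rewrite inE ws orbT.
  by rewrite big_cons /= mulrS; nra.
exists z; first by rewrite inE eqxx.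
by rewrite big_cons /= mulrS; nra.
Qed.

Lemma exists_large_sqr (T : eqType) (s : seq T) (u v : T -> R) (sigma : R) :
  s != [::] -> \sum_(z <- s) u z = sigma ->
  \sum_(z <- s) (u z ^+ 2 - v z ^+ 2) <= sigma ^+ 2 / (2 * (size s)%:R) ->
  exists2 z, z \in s & sigma ^+ 2 <= 2 * (size s)%:R ^+ 2 * v z ^+ 2.
Proof.
move=> s0 su; rewrite sumrB => hle.
have [z zs hz] := exists_ge_mean (fun z => v z ^+ 2) s0.
exists z => //.
have := ler_sqr_sum s u; rewrite su.
have m0 : 0 < (size s)%:R :> R by rewrite ltr0n lt0n size_eq0.
set m := (size s)%:R in m0 hz hle *.
set A := \sum_(i <- s) u i ^+ 2 in hle *; set B := \sum_(i <- s) v i ^+ 2 in hle hz *.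
move: hle; rewrite invfM mulrA ler_pdivlMr // => hle hA.
nra.
Qed.

Lemma le_of_sqr_mul_le (D v sigma m T : R) : 0 <= D -> 0 <= m -> 0 <= T ->
  sigma ^+ 2 * D ^+ 2 <= 2 * m ^+ 2 * v ^+ 2 -> 1 <= T * `|sigma| ->
  D <= 2 * m * T * `|v|.
Proof.
move=> D0 m0 T0 hD hT.
have hT2 : 1 <= (T * `|sigma|) ^+ 2 by rewrite exprn_ege1.
rewrite exprMn real_normK ?num_real // in hT2.
rewrite -(ler_pXn2r (_ : 0 < 2)%N) ?nnegrE ?mulr_ge0 //.
rewrite !exprMn real_normK ?num_real //.
have := sqr_ge0 D; have := sqr_ge0 v; have := sqr_ge0 T; have := sqr_ge0 m.
nra.
Qed.

End real_sums.

Section complex_roots.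
Variable R : realType.
Local Notation C := R[i].
Local Notation Re := (@complex.Re R).
Local Notation Im := (@complex.Im R).

Lemma Re_sum (T : Type) (s : seq T) (F : T -> C) :
  Re (\sum_(z <- s) F z) = \sum_(z <- s) Re (F z).
Proof. exact: (@raddf_sum _ _ (@complex.Re R : Rcomplex R -> R)). Qed.

Lemma Re_sqr (w : C) : Re (w ^+ 2) = Re w ^+ 2 - Im w ^+ 2.
Proof. by case: w => a b; rewrite /= !expr2. Qed.

Lemma Im_inv_real_sub (x : R) (z : C) :
  Im ((x%:C)%C - z)^-1 = Im z / ((x - Re z) ^+ 2 + Im z ^+ 2).
Proof. by case: z => u v /=; rewrite sub0r sqrrN mulNr opprK. Qed.

Lemma monic_complex_roots (P : {poly R}) n : P \is monic -> size P = n.+1 ->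
  exists2 s : seq C,
    map_poly (real_complex R) P = \prod_(z <- s) ('X - z%:P) & size s = n.
Proof.
move=> Pm sP; have [s Hs] := closed_field_poly_normal (map_poly (real_complex R) P).
have HP : map_poly (real_complex R) P = \prod_(z <- s) ('X - z%:P).
  by rewrite Hs lead_coef_map (monicP Pm) rmorph1 scale1r.
exists s => //.
by have := size_map_poly (real_complex R) P; rewrite HP sP size_prod_XsubC => -[].
Qed.

Variables (Q : {poly R}) (s : seq C).
Hypothesis HQ : map_poly (real_complex R) Q = \prod_(z <- s) ('X - z%:P).

Lemma real_notin_roots x : Q.[x] != 0 -> (x%:C)%C \notin s.
Proof.
by rewrite -root_prod_XsubC -HQ /root horner_map fmorph_eq0.
Qed.

Lemma sum_inv_sub_roots x : Q.[x] != 0 ->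
  \sum_(z <- s) ((x%:C)%C - z)^-1 = ((Q^`().[x] / Q.[x])%:C)%C.
Proof.
move=> Qx0; have := horner_deriv_prod_XsubC (real_notin_roots Qx0).
rewrite -HQ deriv_map !horner_map rmorphM fmorphV /= => ->.
by rewrite mulrC mulKf // fmorph_eq0.
Qed.

Lemma sum_inv_sub_roots_sqr x : Q.[x] != 0 ->
  \sum_(z <- s) ((x%:C)%C - z)^-1 ^+ 2 =
  (((Q^`().[x] / Q.[x]) ^+ 2 - Q^`()^`().[x] / Q.[x])%:C)%C.
Proof.
move=> Qx0; have := horner_deriv2_prod_XsubC (real_notin_roots Qx0).
rewrite sum_inv_sub_roots // -HQ !deriv_map !horner_map.
move=> h; rewrite rmorphB rmorphXn !rmorphM !fmorphV /= h.
by field; rewrite fmorph_eq0.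
Qed.

Lemma exists_root_near x T : s != [::] ->
  Q^`().[x] != 0 -> `|Q.[x] / Q^`().[x]| <= T ->
  1 - Q.[x] * Q^`()^`().[x] / Q^`().[x] ^+ 2 <= 1 / (2 * (size s)%:R) ->
  exists2 z, z \in s & (x - Re z) ^+ 2 + Im z ^+ 2 <= 2 * (size s)%:R * T * `|Im z|.
Proof.
move=> s0 b0 hT hq.
set a := Q.[x] in hT hq; set b := Q^`().[x] in b0 hT hq; set c := Q^`()^`().[x] in hq.
have m1 : 1 <= (size s)%:R :> R by rewrite ler1n lt0n size_eq0.
have a0 : a != 0.
  by apply: contraTneq hq => ->; rewrite !mul0r subr0 -ltNge ltr_pdivrMr; lra.
set sigma := b / a.
have hsum : \sum_(z <- s) Re (((x%:C)%C - z)^-1) = sigma.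
  by rewrite -Re_sum sum_inv_sub_roots.
have hsqr : \sum_(z <- s) (Re (((x%:C)%C - z)^-1) ^+ 2 - Im (((x%:C)%C - z)^-1) ^+ 2)
            <= sigma ^+ 2 / (2 * (size s)%:R).
  rewrite -(eq_bigr _ (fun z _ => Re_sqr (((x%:C)%C - z)^-1))) -Re_sum.
  rewrite sum_inv_sub_roots_sqr //=.
  have -> : sigma ^+ 2 - c / a = sigma ^+ 2 * (1 - a * c / b ^+ 2).
    by rewrite /sigma; field; rewrite a0 b0.
  by rewrite ler_wpM2l ?sqr_ge0 // -[(2 * _)^-1]mul1r.
have [z zs hz] := exists_large_sqr s0 hsum hsqr.
exists z => //; apply: (le_of_sqr_mul_le (sigma := sigma)).
- by rewrite addr_ge0 ?sqr_ge0.
- lra.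
- exact: le_trans (normr_ge0 _) hT.
- move: hz; rewrite Im_inv_real_sub; set D := _ + _.
  have [-> _ | D0] := eqVneq D 0.
    by rewrite expr0n /= mulr0; have := sqr_ge0 (Im z); nra.
  rewrite [(Im z / D) ^+ 2]expr_div_n mulrA ler_pdivlMr // exprn_gt0 //.
  by rewrite lt_def D0 addr_ge0 ?sqr_ge0.
- have -> : `|sigma| = `|a / b|^-1 by rewrite -normfV invf_div.
  by rewrite ler_pdivlMr ?mul1r // normr_gt0 mulf_neq0 ?invr_neq0.
Qed.

End complex_roots.

Section powR_sums.
Variable R : realType.
Implicit Types (a b w K beta alpha : R).

Lemma powR_add_le a b alpha : 0 <= a -> 0 <= b -> 0 < alpha <= 1 ->
  (a + b) `^ alpha <= a `^ alpha + b `^ alpha.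
Proof.
move=> a0 b0 /andP[alpha0 alpha1].
have [-> | an0] := eqVneq a 0; first by rewrite add0r powR0 ?gt_eqF ?add0r.
have [-> | bn0] := eqVneq b 0; first by rewrite addr0 powR0 ?gt_eqF ?addr0.
have ab0 : 0 < a + b by rewrite ltr_wpDr // lt_def an0.
have part t : 0 < t <= a + b -> t / (a + b) * (a + b) `^ alpha <= t `^ alpha.
  move=> /andP[t0 tab]; have tab0 : 0 <= t / (a + b) by rewrite divr_ge0 ?ltW.
  rewrite -[in leRHS](divfK (lt0r_neq0 ab0) t) powRM ?(ltW ab0) // ler_wpM2r ?powR_ge0 //.
  by rewrite ger1_powR // divr_gt0 // ler_pdivrMr // mul1r.
have ha : a / (a + b) * (a + b) `^ alpha <= a `^ alpha.
  by apply: part; rewrite lt_def an0 a0 lerDl.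
have hb : b / (a + b) * (a + b) `^ alpha <= b `^ alpha.
  by apply: part; rewrite lt_def bn0 b0 lerDr.
apply: le_trans _ (lerD ha hb).
by rewrite -!mulrDl divff ?mul1r // lt0r_neq0.
Qed.

Lemma powR_sum_le (T : Type) (s : seq T) (g : T -> R) alpha :
  (forall z, 0 <= g z) -> 0 < alpha <= 1 ->
  (\sum_(z <- s) g z) `^ alpha <= \sum_(z <- s) g z `^ alpha.
Proof.
move=> g0 alpha01; elim: s => [|z s IH].
  by rewrite !big_nil powR0 // gt_eqF //; case/andP: alpha01.
rewrite !big_cons; apply: le_trans (powR_add_le (g0 z) _ alpha01) _.
  exact: sumr_ge0.
exact: lerD.
Qed.

Lemma sum_dyadic_powR_le K w beta N : 0 < beta -> 0 <= K -> 0 <= w ->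
  \sum_(0 <= k < N) (if w / 2 ^+ k <= K then (w / 2 ^+ k) `^ beta else 0)
    <= K `^ beta / (1 - 2^-1 `^ beta).
Proof.
move=> beta0 K0 w0; set theta := 2^-1 `^ beta.
have theta1 : theta < 1.
  have := @gt0_ltr_powR R beta beta0 2^-1 1; rewrite powR1.
  by apply; rewrite ?nnegrE ?invr_ge0 // invf_lt1 // ltr1n.
have theta0 : 0 < 1 - theta by rewrite subr_gt0.
suff bound v : 0 <= v ->
    \sum_(0 <= k < N) (if v / 2 ^+ k <= K then (v / 2 ^+ k) `^ beta else 0)
    <= Num.min v K `^ beta / (1 - theta).
  apply: le_trans (bound w w0) _.
  rewrite ler_pM2r ?invr_gt0 // ge0_ler_powR ?nnegrE ?(ltW beta0) //.
  - by rewrite le_min w0 K0.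
  - by rewrite ge_min lexx orbT.
clear w w0; elim: N v => [|N IH] w w0.
  by rewrite big_nil divr_ge0 ?powR_ge0 ?(ltW theta0).
rewrite big_nat_recl // expr0 divr1.
under eq_bigr do rewrite exprS invfM mulrA.
apply: le_trans (lerD (lexx _) (IH _ _)) _; first by rewrite divr_ge0.
have [wK | Kw] := lerP w K.
  rewrite min_l; last by rewrite (le_trans _ wK) // ler_pdivrMr // ler_peMr // ler1n.
  rewrite powRM ?invr_ge0 // -/theta [leLHS](_ : _ = w `^ beta / (1 - theta)) //.
  by field; rewrite lt0r_neq0.
rewrite add0r ler_pM2r ?invr_gt0 // ge0_ler_powR ?nnegrE ?(ltW beta0) //.
- by rewrite le_min K0 divr_ge0.
- by rewrite ge_min lexx orbT.
Qed.

Lemma nneseries_le (f : nat -> \bar R) (M : \bar R) :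
  (forall k, (0 <= f k)%E) -> (forall N, (\sum_(0 <= k < N) f k <= M)%E) ->
  (\sum_(0 <= k <oo) f k <= M)%E.
Proof. by move=> f0 hN; apply: lime_le; [exact: is_cvg_nneseries | exact: nearW]. Qed.

End powR_sums.

Section root_intervals.
Variable R : realType.
Implicit Types (K c w x : R).

Definition root_interval K c w : set R :=
  if w <= K then [set` `[c - Num.sqrt (K * w), c + Num.sqrt (K * w)]] else set0.

Lemma root_intervalP K c w x : 0 <= K -> 0 <= w ->
  (x - c) ^+ 2 + w ^+ 2 <= K * w -> root_interval K c w x.
Proof.
move=> K0 w0 hx; have := sqr_ge0 (x - c); have := sqr_ge0 w => ? ?.
have wK : w <= K by nra.
rewrite /root_interval wK /= in_itv /= -ler_distl -sqrtr_sqr; apply: ler_wsqrtr; lra.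
Qed.

Lemma root_interval_measurable K c w : measurable (root_interval K c w).
Proof. by rewrite /root_interval; case: ifP. Qed.

Lemma lebesgue_measure_root_interval K c w :
  lebesgue_measure (root_interval K c w) =
  (if w <= K then 2 * Num.sqrt (K * w) else 0)%:E.
Proof.
rewrite /root_interval; case: ifP => _; last exact: measure0.
rewrite lebesgue_measure_itv /= lte_fin -EFinD.
have := sqrtr_ge0 (K * w); set r := Num.sqrt _ => r0.
by case: ltrP => [_ | hr]; congr (_%:E); lra.
Qed.

Lemma powR_root_interval_length K w alpha : 0 <= K -> 0 <= w -> 0 < alpha ->
  (if w <= K then 2 * Num.sqrt (K * w) else 0) `^ alpha =
  (2 * Num.sqrt K) `^ alpha * (if w <= K then w `^ (alpha / 2) else 0).
Proof.
move=> K0 w0 alpha0; case: ifP => _; last by rewrite powR0 ?mulr0 // gt_eqF.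
rewrite sqrtrM // mulrA powRM ?mulr_ge0 ?sqrtr_ge0 //.
  by rewrite -[Num.sqrt w]powR12_sqrt // -powRrM [2^-1 * _]mulrC.
Qed.

Lemma le_lebesgue_measure (A B : set R) : A `<=` B ->
  (lebesgue_measure A <= lebesgue_measure B)%E.
Proof. by move=> AB; exact: le_mu_ext. Qed.

Lemma measure_bigsetU_le d (T : measurableType d) (mu : {measure set T -> \bar R})
    (I : Type) (s : seq I) (F : I -> set T) : (forall i, measurable (F i)) ->
  (mu (\big[setU/set0]_(i <- s) F i) <= \sum_(i <- s) mu (F i))%E.
Proof.
move=> mF; elim: s => [|i s IH]; first by rewrite !big_nil measure0.
rewrite !big_cons; apply: le_trans (measureU2 _ (mF i) _) _.
  exact: bigsetU_measurable.
exact: leeD.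
Qed.

End root_intervals.

Section rescaled_polynomial.
Variable R : realType.
Local Notation C := R[i].
Local Notation Re := (@complex.Re R).
Local Notation Im := (@complex.Im R).

Lemma Re_mul_real (z : C) (r : R) : Re (z * (r%:C)%C) = Re z * r.
Proof. by case: z => a b; rewrite /= !mulr0 subr0. Qed.

Lemma Im_mul_real (z : C) (r : R) : Im (z * (r%:C)%C) = Im z * r.
Proof. by case: z => a b; rewrite /= !mulr0 add0r. Qed.

Definition Ptilde_poly (n : nat) (P : {poly R}) (k : nat) : {poly R} :=
  2 ^- (n * k) *: (P \Po (2 ^+ k *: 'X)).

Lemma Ptilde_horner n P k : Ptilde n P k = horner (Ptilde_poly n P k).
Proof.
by apply/funext => x; rewrite /Ptilde hornerZ horner_comp hornerZ hornerX.
Qed.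

Lemma map_Ptilde_poly n P k (s : seq C) :
  map_poly (real_complex R) P = \prod_(z <- s) ('X - z%:P) -> size s = n ->
  map_poly (real_complex R) (Ptilde_poly n P k) =
  \prod_(z <- [seq z * ((2 ^- k)%:C)%C | z <- s]) ('X - z%:P).
Proof.
move=> HP sn; have c0 : ((2 ^+ k)%:C)%C != 0 :> C by rewrite fmorph_eq0 expf_neq0.
rewrite map_polyZ map_comp_poly HP map_polyZ map_polyX comp_prod_XsubC_scaleX //.
have factor1 : real_complex R (2 ^- (n * k)) * real_complex R (2 ^+ k) ^+ n = 1.
  have : 2 ^- (n * k) * (2 ^+ k) ^+ n = 1 :> R.
    by rewrite -exprM mulnC mulVf // expf_neq0.
  by move/(congr1 (real_complex R)); rewrite rmorphM rmorphXn rmorph1.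
rewrite scalerA sn factor1 scale1r.
by congr (\prod_(z <- _) _); apply: eq_map => z; rewrite fmorphV.
Qed.

Lemma derive1_horner_div_deriv (Q : {poly R}) x : Q^`().[x] != 0 ->
  derive1 (fun y => Q.[y] / Q^`().[y]) x =
  1 - Q.[x] * Q^`()^`().[x] / Q^`().[x] ^+ 2.
Proof.
move=> Q'x0; rewrite derive1E.
have D := is_deriveM (is_derive_poly Q x) (is_deriveV Q'x0 (is_derive_poly Q^`() x)).
rewrite (_ : (fun y => _) = horner Q * (fun y => Q^`().[y]^-1)) //.
by rewrite (@derive_val _ _ _ _ _ _ _ D) /GRing.scale /=; field.
Qed.

Lemma Eset_sub_root_intervals n C1 P (s : seq C) k : (0 < n)%N -> 0 < C1 ->
  map_poly (real_complex R) P = \prod_(z <- s) ('X - z%:P) -> size s = n ->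
  Eset n C1 P k `<=` \big[setU/set0]_(z <- s)
    root_interval (2 * n%:R * (4 / C1)) (Re z / 2 ^+ k) (`|Im z| / 2 ^+ k).
Proof.
move=> n0 C10 HP sn x; rewrite /Eset /= Ptilde_horner -derivE => -[Q'x0 [hT hq]].
rewrite derive1_horner_div_deriv // in hq.
set s' := [seq z * ((2 ^- k)%:C)%C | z <- s].
have s'n : size s' = n by rewrite size_map.
have s'0 : s' != [::] by rewrite -size_eq0 s'n -lt0n.
have n1 : 1 <= n%:R :> R by rewrite ler1n.
have {}hq : 1 - (Ptilde_poly n P k).[x] * (Ptilde_poly n P k)^`()^`().[x] /
    (Ptilde_poly n P k)^`().[x] ^+ 2 <= 1 / (2 * (size s')%:R).
  by apply: le_trans hq _; rewrite s'n !div1r lef_pV2 ?posrE; lra.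
have [_ /mapP[z zs ->]] := exists_root_near (map_Ptilde_poly k HP sn) s'0 Q'x0 hT hq.
rewrite Re_mul_real Im_mul_real s'n => hz.
have k0 : 0 <= 2 ^- k :> R by rewrite invr_ge0 exprn_ge0.
rewrite -bigcup_seq; exists z => //; apply: root_intervalP.
- by rewrite !mulr_ge0 ?invr_ge0 // ltW.
- by rewrite mulr_ge0.
by rewrite -[(Im z * _) ^+ 2]real_normK ?num_real // !normrM (ger0_norm k0) in hz.
Qed.

End rescaled_polynomial.

Section Eset_measure.
Variable R : realType.
Variables (n : nat) (C1 : R) (P : {poly R}) (s : seq R[i]).
Hypotheses (n0 : (0 < n)%N) (C10 : 0 < C1).
Hypotheses (HP : map_poly (real_complex R) P = \prod_(z <- s) ('X - z%:P)) (sn : size s = n).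
Local Notation K := (2 * n%:R * (4 / C1)).

Lemma Eset_measure_powR_le k alpha : 0 < alpha <= 1 ->
  (lebesgue_measure (Eset n C1 P k) `^ alpha <=
   (\sum_(z <- s) (2 * Num.sqrt K) `^ alpha *
      (if `|complex.Im z| / 2 ^+ k <= K then (`|complex.Im z| / 2 ^+ k) `^ (alpha / 2)
       else 0))%:E)%E.
Proof.
move=> /andP[alpha0 alpha1].
have K0 : 0 <= K by rewrite !mulr_ge0 ?invr_ge0 ?(ltW C10).
set len := fun z : R[i] => if `|complex.Im z| / 2 ^+ k <= K
  then 2 * Num.sqrt (K * (`|complex.Im z| / 2 ^+ k)) else 0.
have len0 z : 0 <= len z by rewrite /len; case: ifP; rewrite ?mulr_ge0 ?sqrtr_ge0.
have mE : (lebesgue_measure (Eset n C1 P k) <= (\sum_(z <- s) len z)%:E)%E.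
  apply: le_trans (le_lebesgue_measure (Eset_sub_root_intervals (k := k) n0 C10 HP sn)) _.
  apply: le_trans (measure_bigsetU_le _ _ _) _ => [z | ]; first exact: root_interval_measurable.
  rewrite -sumEFin; apply: lee_sum => z _.
  by rewrite /len -(lebesgue_measure_root_interval _ (complex.Re z / 2 ^+ k)).
apply: le_trans (gt0_ler_poweR (ltW alpha0) _ _ mE) _.
- by rewrite in_itv /= measure_ge0 leey.
- by rewrite in_itv /= lee_fin sumr_ge0 // leey.
rewrite poweR_EFin lee_fin; apply: le_trans (powR_sum_le _ len0 _) _.
  by rewrite alpha0 alpha1.
by apply: ler_sum => z _; rewrite powR_root_interval_length.
Qed.

End Eset_measure.

Theorem lemma3p4 (R : realType) (n : nat) (C1 alpha : R) :
  (0 < n)%N -> 0 < C1 -> 0 < alpha < 1 ->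
  exists C : R, forall P : {poly R},
    P \is monic -> size P = n.+1 ->
    (\sum_(0 <= k <oo) ((@lebesgue_measure R (Eset n C1 P k)) `^ alpha)
       <= C%:E)%E.
Proof.
move=> n0 C10 /andP[alpha0 alpha1].
set K := 2 * n%:R * (4 / C1).
have K0 : 0 <= K by rewrite !mulr_ge0 ?invr_ge0 ?(ltW C10).
set B := K `^ (alpha / 2) / (1 - 2^-1 `^ (alpha / 2)).
exists ((2 * Num.sqrt K) `^ alpha * B *+ n) => P Pm sP.
have [s HP sn] := monic_complex_roots Pm sP.
apply: nneseries_le => [k | N]; first exact: poweR_ge0.
have alpha01 : 0 < alpha <= 1 by rewrite alpha0 ltW.
apply: le_trans (lee_sum _ (fun k _ => Eset_measure_powR_le n0 C10 HP sn k alpha01)) _.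
rewrite sumEFin lee_fin exchange_big /=.
apply: le_trans (_ : _ <= \sum_(z <- s) (2 * Num.sqrt K) `^ alpha * B) _.
  apply: ler_sum => z _; rewrite -mulr_sumr ler_wpM2l ?powR_ge0 //.
  by apply: sum_dyadic_powR_le; rewrite ?divr_gt0.
by rewrite big_const_seq count_predT sn iter_addr_0.
Qed.
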